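(* Let $\mathsf{A}\subset GL_2(\mathbb{R})$ be such that $\mathsf{A}$ has an invariant unstable multicone $\mathcal{C}$ and $\mathcal{S}(\mathsf{A})$ does not contain parabolic elements. Let $\mathsf{A}_e$ be the collection of all conformal elements of $\mathsf{A}$. Then $A_1F_1\cdots A_nF_n\mathcal{C}\subset\mathcal{C}^o$ for all $n\ge(\#\partial\mathcal{C})^2+1$, all $A_1,\ldots,A_n\in\mathsf{A}\setminus\mathsf{A}_e$, and all $F_1,\ldots,F_n\in\mathcal{F}(\mathsf{A})$.
   Context: $\mathcal{S}(\mathsf{B})$ denotes the semigroup of finite products of elements of $\mathsf{B}$, and $\mathcal{F}(\mathsf{A})=\mathcal{S}(\{|\det A|^{-1/2}A: A\in\mathsf{A}_e\})$. A matrix is conformal if its two eigenvalues have equal absolute value; parabolic if it has only one eigenspace; proximal if it has real eigenvalues of distinct absolute value, with $u(A)$, $s(A)$ the eigenspaces for the eigenvalue of larger/smaller absolute value. $\mathbb{RP}^1$ is the real projective line; a multicone is a proper subset of $\mathbb{RP}^1$ that is a finite union of closed projective intervals; $\mathcal{C}^o$ is its interior and $\partial\mathcal{C}$ its boundary; invariant means $A\mathcal{C}\subset\mathcal{C}$ for all $A\in\mathsf{A}$. $X_u(\mathsf{A})=\overline{\{u(A):A\in\mathcal{S}(\mathsf{A})\text{ proximal}\}}$, $X_s(\mathsf{A})=\overline{\{s(A):A\in\mathcal{S}(\mathsf{A})\text{ proximal}\}}$. A multicone $\mathcal{C}$ is an unstable multicone for $\mathsf{A}$ if $\mathcal{S}(\mathsf{A})$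 contains a proximal element, $\mathcal{C}\cap X_s(\mathsf{A})=\emptyset$, $\partial\mathcal{C}\cap X_u(\mathsf{A})=\emptyset$, and each connected component of $\mathcal{C}$ meets $X_u(\mathsf{A})$. *)

(* A point of RP^1 is represented by any nonzero
   column vector spanning the line; subsets of RP^1 are represented by
   predicates on vectors which hold only for nonzero vectors and are
   invariant under nonzero scaling. *)
From HB Require Import structures.
From mathcomp Require Import all_boot all_order all_algebra.
From mathcomp Require Import reals complex.
Set Implicit Arguments. Unset Strict Implicit. Unset Printing Implicit Defensive.
Import Order.TTheory GRing.Theory Num.Theory.
Local Open Scope ring_scope.
Local Open Scope complex_scope.

Section Defs.
Variable R : realType.

Definition vec := 'cV[R]_2.
Definition mat := 'M[R]_2.
Definition pset := vec -> Prop.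

Definition collinear (v w : vec) : Prop := \det (row_mx v w) = 0.

Definition dot (v w : vec) : R := (v^T *m w) 0 0.

(* squared sine of the angle between the lines [v] and [w]; it is a
   pseudometric-equivalent of the standard metric on RP^1 and defines
   the usual topology of RP^1 on nonzero vectors *)
Definition pdist (v w : vec) : R := (\det (row_mx v w)) ^+ 2 / (dot v v * dot w w).

Definition popen (U : pset) : Prop :=
  forall v, U v -> v != 0 /\ exists2 e : R, 0 < e &
     forall w, w != 0 -> pdist v w < e -> U w.

Definition pinterior (S : pset) : pset := fun v =>
  v != 0 /\ exists2 e : R, 0 < e & forall w, w != 0 -> pdist v w < e -> S w.

Definition pclosure (S : pset) : pset := fun v =>
  v != 0 /\ forall e : R, 0 < e -> exists w, [/\ S w, w != 0 & pdist v w < e].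

Definition pboundary (S : pset) : pset := fun v =>
  pclosure S v /\ ~ pinterior S v.

Definition pconnected (S : pset) : Prop :=
  ~ exists U V : pset, [/\ popen U /\ popen V,
      (forall v, S v -> U v \/ V v),
      (exists v, S v /\ U v), (exists v, S v /\ V v) &
      (forall v, ~ [/\ S v, U v & V v])].

Definition same_component (S : pset) (v w : vec) : Prop :=
  exists K : pset, [/\ pconnected K, (forall x, K x -> S x), K v & K w].

Definition pinterval (p q : vec) : pset := fun v =>
  v != 0 /\ exists s t : R, [/\ 0 <= s, 0 <= t &
     (v = s *: p + t *: q \/ - v = s *: p + t *: q)].

Definition multicone (C : pset) : Prop :=
  (exists s : seq (vec * vec),
     (forall pq, pq \in s -> pq.1 != 0 /\ pq.2 != 0 /\ ~ collinear pq.1 pq.2) /\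
     (forall v, C v <-> exists2 pq, pq \in s & pinterval pq.1 pq.2 v)) /\
  (exists v : vec, v != 0 /\ ~ C v).

Definition pcard (S : pset) (k : nat) : Prop :=
  exists s : seq vec, [/\ size s = k,
     (forall v, v \in s -> S v),
     (forall i j, (i < k)%N -> (j < k)%N -> i <> j ->
         ~ collinear (nth 0 s i) (nth 0 s j)) &
     (forall v, S v -> exists2 w, w \in s & collinear v w)].

Inductive semigroup (B : mat -> Prop) : mat -> Prop :=
  | sg_gen A : B A -> semigroup B A
  | sg_mul A A' : semigroup B A -> semigroup B A' -> semigroup B (A *m A').

Definition ceig (A : mat) (l : R[i]) : bool :=
  eigenvalue (map_mx (fun x : R => x%:C) A) l.

Definition conformal (A : mat) : Prop :=
  forall l m : R[i], ceig A l -> ceig A m -> `|l| = `|m|.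

Definition real_eigvec (A : mat) (a : R) (v : vec) : Prop :=
  v != 0 /\ A *m v = a *: v.

Definition parabolic (A : mat) : Prop :=
  (exists v a, real_eigvec A a v) /\
  (forall v w a b, real_eigvec A a v -> real_eigvec A b w -> collinear v w).

Definition proximal (A : mat) : Prop :=
  exists a b : R, `|a| < `|b| /\
     (exists v, real_eigvec A a v) /\ (exists v, real_eigvec A b v).

Definition unstable_dir (A : mat) (v : vec) : Prop :=
  exists a b : R, [/\ `|a| < `|b|, (exists w, real_eigvec A a w) & real_eigvec A b v].
Definition stable_dir (A : mat) (v : vec) : Prop :=
  exists a b : R, [/\ `|a| < `|b|, real_eigvec A a v & (exists w, real_eigvec A b w)].

Definition Xu (Aset : mat -> Prop) : pset :=
  pclosure (fun v => exists2 B, semigroup Aset B & unstable_dir B v).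
Definition Xs (Aset : mat -> Prop) : pset :=
  pclosure (fun v => exists2 B, semigroup Aset B & stable_dir B v).

Definition minvariant (Aset : mat -> Prop) (C : pset) : Prop :=
  forall A v, Aset A -> C v -> C (A *m v).

Definition unstable_multicone (Aset : mat -> Prop) (C : pset) : Prop :=
  [/\ multicone C,
      (exists2 B, semigroup Aset B & proximal B),
      (forall v, ~ (C v /\ Xs Aset v)),
      (forall v, ~ (pboundary C v /\ Xu Aset v)) &
      (forall v, C v -> exists w, same_component C v w /\ Xu Aset w)].

Definition Aconf (Aset : mat -> Prop) : mat -> Prop :=
  fun A => Aset A /\ conformal A.

Definition Fset (Aset : mat -> Prop) : mat -> Prop :=
  semigroup (fun B => exists2 A, Aconf Aset A &
                B = (Num.sqrt `|\det A|)^-1 *: A).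

End Defs.

From HB Require Import structures.
From mathcomp Require Import all_boot all_order all_algebra.
From mathcomp Require Import reals complex.
From mathcomp Require Import ring lra zify.
From Stdlib Require Import Classical.
Import Order.TTheory GRing.Theory Num.Theory.
Local Open Scope ring_scope.

Set Implicit Arguments. Unset Strict Implicit. Unset Printing Implicit Defensive.

(* Suppose the product applied to v does not land in the interior of C. Every factor
   A_j F_j is a nonzero multiple of an element of S(A), so it maps C into C and the
   interior into the interior; hence all the tails W_j = A_j F_j ... A_(n-1) F_(n-1) v lie on
   the boundary of C, which has k points. By pigeonhole two of W_0, ..., W_k span the
   same line, so a block P = A_a F_a ... A_(b-1) F_(b-1) has an eigenline on the
   boundary. That eigenline is neither stable (C misses X_s) nor unstable (the boundary
   misses X_u), and P is not parabolic, so P^2 is scalar. Since P = A_a Y with Y(C) in C,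
   this forces A_a^-1 (C) in C; iterating A_a^-1 on the boundary point and using
   pigeonhole again gives a power of A_a with a boundary eigenline, hence some power
   of A_a is scalar and A_a is conformal. In fact n >= k factors suffice. *)

Section Coordinates.
Variable R : comNzRingType.
Implicit Types (v w : 'cV[R]_2) (M N : 'M[R]_2).

Lemma ord2P (i : 'I_2) : i = 0 \/ i = 1.
Proof. by case: i => [[|[|//]]] ?; [left|right]; apply/val_inj. Qed.

Lemma col2P v w : v 0 0 = w 0 0 -> v 1 0 = w 1 0 -> v = w.
Proof.
move=> h0 h1; apply/matrixP => i j; rewrite (ord1 j).
by case: (ord2P i) => ->.
Qed.

Lemma mx2P M N : M 0 0 = N 0 0 -> M 0 1 = N 0 1 -> M 1 0 = N 1 0 -> M 1 1 = N 1 1 ->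
  M = N.
Proof.
move=> h00 h01 h10 h11; apply/matrixP => i j.
by case: (ord2P i) => ->; case: (ord2P j) => ->.
Qed.

Lemma col2_neq0 v : v != 0 -> v 0 0 != 0 \/ v 1 0 != 0.
Proof.
move=> v0; case: (eqVneq (v 0 0) 0) => h0; last by left.
case: (eqVneq (v 1 0) 0) => h1; last by right.
by case/eqP: v0; apply: col2P; rewrite mxE.
Qed.

Let ord0_2 : ord0 = 0 :> 'I_2. Proof. exact: val_inj. Qed.
Let lift0_2 : lift ord0 ord0 = 1 :> 'I_2. Proof. exact: val_inj. Qed.

Lemma mulmx2E m p (M : 'M[R]_(m, 2)) (N : 'M[R]_(2, p)) i j :
  (M *m N) i j = M i 0 * N 0 j + M i 1 * N 1 j.
Proof. by rewrite mxE !big_ord_recl big_ord0 addr0 ord0_2 lift0_2. Qed.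

Lemma det_mx22 M : \det M = M 0 0 * M 1 1 - M 0 1 * M 1 0.
Proof.
rewrite (expand_det_row _ 0) !big_ord_recl big_ord0 addr0 /cofactor !det_mx11 !mxE.
rewrite !ord0_2 !lift0_2 (_ : lift 1 0 = 0) /= ?expr0 ?expr1; last exact: val_inj.
ring.
Qed.

Lemma trace_mx22 M : \tr M = M 0 0 + M 1 1.
Proof. by rewrite /mxtrace !big_ord_recl big_ord0 addr0 ord0_2 lift0_2. Qed.

Lemma det_row_mx2 v w : \det (row_mx v w) = v 0 0 * w 1 0 - v 1 0 * w 0 0.
Proof.
have rowl i : row_mx v w i 0 = v i 0.
  by rewrite (_ : 0 = lshift 1 (0 : 'I_1)) ?row_mxEl //; exact: val_inj.
have rowr i : row_mx v w i 1 = w i 0.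
  by rewrite (_ : 1 = rshift 1 (0 : 'I_1)) ?row_mxEr //; exact: val_inj.
by rewrite det_mx22 !rowl !rowr [w 0 0 * _]mulrC.
Qed.

Lemma cayley_hamilton2 M : M *m M = \tr M *: M - (\det M)%:M.
Proof. by apply: mx2P; rewrite mulmx2E trace_mx22 det_mx22 !mxE /=; ring. Qed.

End Coordinates.

Lemma prod_mulmx_closed (R : nzRingType) n (Q : 'cV[R]_n.+1 -> Prop)
    (G : nat -> 'M[R]_n.+1) i j :
  (forall l x, Q x -> Q (G l *m x)) ->
  forall x, Q x -> Q ((\prod_(i <= l < j) G l) *m x).
Proof.
move=> QG; apply: (big_ind (fun M => forall x, Q x -> Q (M *m x))).
- by move=> x; rewrite mul1mx.
- by move=> M N QM QN x; rewrite -mulmxE -mulmxA => /QN /QM.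
- by move=> l _; apply: QG.
Qed.

Section ProjectiveLine.
Variable R : realType.
Implicit Types (u v w x : vec R) (B : mat R).

Let sqr_gt0 (a : R) : a != 0 -> 0 < a ^+ 2.
Proof. by move=> a0; rewrite lt0r sqr_ge0 expf_neq0. Qed.

Lemma collinear_scale v w : collinear v w -> w != 0 -> exists k : R, v = k *: w.
Proof.
rewrite /collinear det_row_mx2 => /eqP; rewrite subr_eq0 => /eqP vw.
case/col2_neq0 => w0; [exists (v 0 0 / w 0 0) | exists (v 1 0 / w 1 0)];
  apply: col2P; rewrite !mxE ?divfK //.
- by rewrite mulrAC vw mulfK.
- by rewrite mulrAC -vw mulfK.
Qed.

Lemma collinear_trans u v w : collinear u w -> collinear v w -> w != 0 -> collinear u v.
Proof.
move=> uw vw w0; have [k ->] := collinear_scale uw w0; have [l ->] := collinear_scale vw w0.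
by rewrite /collinear det_row_mx2 !mxE; ring.
Qed.

Lemma dotE v : dot v v = v 0 0 ^+ 2 + v 1 0 ^+ 2.
Proof. by rewrite /dot mulmx2E !mxE !expr2. Qed.

Lemma dot_gt0 v : v != 0 -> 0 < dot v v.
Proof.
rewrite dotE => /col2_neq0 v0.
have := sqr_ge0 (v 0 0); have := sqr_ge0 (v 1 0).
by case: v0 => /sqr_gt0; lra.
Qed.

Lemma pdist_refl v : pdist v v = 0.
Proof. by rewrite /pdist det_row_mx2 [v 1 0 * _]mulrC subrr expr0n mul0r. Qed.

Lemma pclosure_refl (P : pset R) v : v != 0 -> P v -> pclosure P v.
Proof. by move=> v0 Pv; split=> // e e0; exists v; rewrite pdist_refl. Qed.

Lemma mulmx_neq0 B v : \det B != 0 -> v != 0 -> B *m v != 0.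
Proof.
move=> B0; apply: contraNneq => Bv0.
have Bu : B \in unitmx by rewrite unitmxE unitfE.
by rewrite -(mulKmx Bu v) Bv0 mulmx0.
Qed.

Definition sqr_frobenius B := B 0 0 ^+ 2 + B 0 1 ^+ 2 + B 1 0 ^+ 2 + B 1 1 ^+ 2.

Lemma sqr_frobenius_gt0 B : \det B != 0 -> 0 < sqr_frobenius B.
Proof.
rewrite det_mx22 /sqr_frobenius => /sqr_gt0 det0.
set U := B 0 0 ^+ 2 + B 0 1 ^+ 2; set V := B 1 0 ^+ 2 + B 1 1 ^+ 2.
have lagrange : U * V = (B 0 0 * B 1 1 - B 0 1 * B 1 0) ^+ 2
    + (B 0 0 * B 1 0 + B 0 1 * B 1 1) ^+ 2 by rewrite /U /V; ring.
have UV0 : 0 < U * V by rewrite lagrange ltr_wpDr ?sqr_ge0.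
have U0 : 0 <= U by rewrite addr_ge0 ?sqr_ge0.
have V0 : 0 <= V by rewrite addr_ge0 ?sqr_ge0.
rewrite -addrA -/V; nra.
Qed.

Lemma dot_mulmx_le B v : dot (B *m v) (B *m v) <= sqr_frobenius B * dot v v.
Proof.
rewrite !dotE /sqr_frobenius !mulmx2E.
have := sqr_ge0 (B 0 0 * v 1 0 - B 0 1 * v 0 0).
have := sqr_ge0 (B 1 0 * v 1 0 - B 1 1 * v 0 0).
nra.
Qed.

Lemma pdist_mulmx_ge B v w : \det B != 0 -> v != 0 -> w != 0 ->
  \det B ^+ 2 * pdist v w <= sqr_frobenius B ^+ 2 * pdist (B *m v) (B *m w).
Proof.
move=> B0 v0 w0; rewrite /pdist -mul_mx_row det_mulmx.
have X0 := dot_gt0 v0; have Y0 := dot_gt0 w0.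
have P0 := dot_gt0 (mulmx_neq0 B0 v0); have Q0 := dot_gt0 (mulmx_neq0 B0 w0).
have PQ : dot (B *m v) (B *m v) * dot (B *m w) (B *m w)
    <= sqr_frobenius B ^+ 2 * (dot v v * dot w w).
  rewrite expr2 mulrACA.
  by apply: ler_pM; rewrite ?dot_mulmx_le // ltW.
set d := \det (row_mx v w); set N := sqr_frobenius B.
set P := dot (B *m v) _ in PQ *; set Q := dot (B *m w) _ in PQ *.
have -> : \det B ^+ 2 * (d ^+ 2 / (dot v v * dot w w))
    = \det B ^+ 2 * d ^+ 2 * (dot v v * dot w w)^-1 by ring.
have -> : N ^+ 2 * ((\det B * d) ^+ 2 / (P * Q))
    = \det B ^+ 2 * d ^+ 2 * (N ^+ 2 / (P * Q)) by ring.
rewrite ler_wpM2l ?(mulr_ge0 (sqr_ge0 _) (sqr_ge0 _)) // ler_pdivlMr ?mulr_gt0 //.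
by rewrite mulrC ler_pdivrMr ?mulr_gt0.
Qed.

Lemma pinterior_mulmx (C : pset R) B : \det B != 0 -> (forall x, C x -> C (B *m x)) ->
  forall x, pinterior C x -> pinterior C (B *m x).
Proof.
move=> B0 BC x [x0 [e e0 near_x]].
have Bu : B \in unitmx by rewrite unitmxE unitfE.
have N0 := sqr_frobenius_gt0 B0.
split; first exact: mulmx_neq0.
exists (e * \det B ^+ 2 / sqr_frobenius B ^+ 2).
  by rewrite divr_gt0 ?exprn_gt0 // mulr_gt0 // sqr_gt0.
move=> w w0 dBxw.
have y0 : invmx B *m w != 0.
  by apply: contraNneq w0 => Bw0; rewrite -(mulKVmx Bu w) Bw0 mulmx0.
rewrite -(mulKVmx Bu w); apply/BC/near_x => //.
have := pdist_mulmx_ge B0 x0 y0; rewrite mulKVmx // => le_dist.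
rewrite -(ltr_pM2l (sqr_gt0 B0)) (le_lt_trans le_dist) //.
by rewrite -ltr_pdivlMl ?exprn_gt0 // mulrC [_ * e]mulrC.
Qed.

End ProjectiveLine.

Section Multicone.
Variables (R : realType) (C : pset R).
Hypothesis mcC : multicone C.

Lemma multicone_neq0 v : C v -> v != 0.
Proof. by case: mcC => [[s [_ /(_ v) [+ _]]] _] => /[apply] -[pq _ []]. Qed.

Lemma multicone_scale v (c : R) : c != 0 -> C v -> C (c *: v).
Proof.
case: mcC => [[s [_ memC]] _].
have C_opp x : C x -> C (- x).
  move/memC => [pq pq_s [x0 [a [b [a0 b0 x_ab]]]]]; apply/memC; exists pq => //.
  split; first by rewrite oppr_eq0.
  by exists a, b; split => //; rewrite opprK; case: x_ab; [right | left].
have C_pos (d : R) x : 0 < d -> C x -> C (d *: x).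
  move=> d0 /memC [pq pq_s [x0 [a [b [a0 b0 x_ab]]]]]; apply/memC; exists pq => //.
  split; first by rewrite scaler_eq0 negb_or x0 gt_eqF.
  exists (d * a), (d * b); split; rewrite ?mulr_ge0 ?(ltW d0) //.
  by rewrite -!scalerA -scalerDr -scalerN; case: x_ab => <-; [left | right].
case: (ltrgt0P c) => // [c0 | c0] _; first exact: C_pos.
by move=> Cv; rewrite -[c]opprK scaleNr -scalerN; apply/C_pos/C_opp; rewrite ?oppr_gt0.
Qed.

Lemma boundary_of_not_interior v : C v -> ~ pinterior C v -> pboundary C v.
Proof.
by move=> Cv notint; split=> //; apply/pclosure_refl/Cv/multicone_neq0.
Qed.

End Multicone.

Definition scaled_semigroup (R : realType) (Aset : mat R -> Prop) (M : mat R) :=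
  exists c S, [/\ c != 0, semigroup Aset S & M = c *: S].

Section ScaledSemigroup.
Variables (R : realType) (Aset : mat R -> Prop) (C : pset R).
Hypothesis mcC : multicone C.
Hypothesis GL : forall A, Aset A -> \det A != 0.
Hypothesis invC : minvariant Aset C.

Lemma semigroup_det_neq0 S : semigroup Aset S -> \det S != 0.
Proof. by elim=> [A /GL // | A B _ A0 _ B0]; rewrite det_mulmx mulf_neq0. Qed.

Lemma semigroup_invariant S : semigroup Aset S -> forall v, C v -> C (S *m v).
Proof.
elim=> [A /invC // | A B _ AC _ BC v Cv].
by rewrite -mulmxA; apply/AC/BC.
Qed.

Lemma semigroup_exp A m : Aset A -> (0 < m)%N -> semigroup Aset (A ^+ m).
Proof.
move=> AA; elim: m => [// | [|m] IHm _]; first by rewrite expr1; constructor.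
by rewrite exprSr; apply: sg_mul; [apply: IHm | constructor].
Qed.

Lemma semigroup_scaled S : semigroup Aset S -> scaled_semigroup Aset S.
Proof. by exists 1, S; rewrite scale1r oner_neq0. Qed.

Lemma scaled_semigroup_mul M N : scaled_semigroup Aset M -> scaled_semigroup Aset N ->
  scaled_semigroup Aset (M *m N).
Proof.
move=> [c [S [c0 SS ->]]] [d [T [d0 ST ->]]]; exists (c * d), (S *m T).
by rewrite mulf_neq0 // -scalemxAl -scalemxAr scalerA; split=> //; apply: sg_mul.
Qed.

Lemma Fset_scaled F : Fset Aset F -> scaled_semigroup Aset F.
Proof.
elim=> [_ [A [AA _] ->] | M N _ SM _ SN]; last exact: scaled_semigroup_mul.
exists (Num.sqrt `|\det A|)^-1, A; split => //; last exact: sg_gen.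
by rewrite invr_neq0 // gt_eqF // sqrtr_gt0 normr_gt0 GL.
Qed.

Lemma scaled_semigroup_det M : scaled_semigroup Aset M -> \det M != 0.
Proof.
by move=> [c [S [c0 SS ->]]]; rewrite detZ mulf_neq0 ?expf_neq0 ?semigroup_det_neq0.
Qed.

Lemma scaled_semigroup_invariant M : scaled_semigroup Aset M -> forall v, C v -> C (M *m v).
Proof.
move=> [c [S [c0 SS ->]]] v Cv; rewrite -scalemxAl.
exact/(multicone_scale mcC c0)/semigroup_invariant.
Qed.

Lemma scaled_semigroup_interior M : scaled_semigroup Aset M ->
  forall v, pinterior C v -> pinterior C (M *m v).
Proof.
move=> SM; apply: pinterior_mulmx.
  exact: scaled_semigroup_det.
exact: scaled_semigroup_invariant.
Qed.

Lemma scaled_semigroup_prod (G : nat -> mat R) i j :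
  (forall l, scaled_semigroup Aset (G l)) -> (i < j)%N ->
  scaled_semigroup Aset (\prod_(i <= l < j) G l).
Proof.
move=> SG; elim: j => // j IHj; rewrite ltnS leq_eqVlt => /predU1P [<- | ij].
  by rewrite big_nat1.
by rewrite big_nat_recr 1?ltnW //= -mulmxE; apply/scaled_semigroup_mul/SG/IHj.
Qed.

End ScaledSemigroup.

Section Eigen2.
Variable R : realType.
Implicit Types (S N : mat R) (p q v w : vec R) (l m : R).

Lemma eigenvalue_root2 S p l : p != 0 -> S *m p = l *: p ->
  l ^+ 2 - \tr S * l + \det S = 0.
Proof.
move=> p0 Sp; have := congr1 (mulmx^~ p) (cayley_hamilton2 S).
rewrite /= -mulmxA Sp -scalemxAr Sp scalerA mulmxBl -scalemxAl Sp scalerA mul_scalar_mx.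
move=> CHp; have : (l ^+ 2 - \tr S * l + \det S) *: p = 0.
  by rewrite scalerDl scalerBl expr2 CHp addrAC subrK subrr.
by move/eqP; rewrite scaler_eq0 (negbTE p0) orbF => /eqP.
Qed.

Lemma col_neq0_mx2 N : N != 0 -> exists j, col j N != 0.
Proof.
move=> N0; case: (eqVneq (col 0 N) 0) => [c0 | ]; last by exists 0.
exists 1; apply: contraNneq N0 => c1; apply/eqP/matrixP => i j.
by case: (ord2P j) => ->; [move: c0 | move: c1] => /(congr1 (fun M : vec R => M i 0));
  rewrite !mxE.
Qed.

Lemma real_eigvec_conj2 S p l : p != 0 -> S *m p = l *: p -> \tr S - l != l ->
  exists q, real_eigvec S (\tr S - l) q.
Proof.
move=> p0 Sp ml; set m := \tr S - l in ml *.
have Sl0 : S - l%:M != 0.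
  apply: contraNneq ml => /eqP; rewrite subr_eq0 => /eqP Sl.
  by rewrite /m Sl mxtrace_scalar mulr2n addrK.
have root := eigenvalue_root2 p0 Sp.
have SN : S *m (S - l%:M) = m *: (S - l%:M).
  rewrite mulmxBr cayley_hamilton2 mul_mx_scalar.
  have -> : \det S = m * l by rewrite /m; lra.
  by rewrite scalerBr scale_scalar_mx addrAC -scalerBl.
have [j colj0] := col_neq0_mx2 Sl0.
by exists (col j (S - l%:M)); split; rewrite // !colE mulmxA SN scalemxAl.
Qed.

Lemma kernel_collinear2 N v w : N != 0 -> N *m v = 0 -> N *m w = 0 -> collinear v w.
Proof.
move=> N0 Nv Nw; apply/eqP/negPn/negP => det0; case/eqP: N0.
have Xu : row_mx v w \in unitmx by rewrite unitmxE unitfE.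
by rewrite -(mulmxK Xu N) (mul_mx_row N v w) Nv Nw row_mx0 mul0mx.
Qed.

Lemma scalar_or_parabolic2 S p l : p != 0 -> S *m p = l *: p -> \tr S = l + l ->
  S = l%:M \/ parabolic S.
Proof.
move=> p0 Sp trS; have detS : \det S = l ^+ 2.
  by have := eigenvalue_root2 p0 Sp; rewrite trS; lra.
case: (eqVneq S l%:M) => [-> | Sl]; [by left | right].
split; first by exists p, l.
have eig_l v a : real_eigvec S a v -> (S - l%:M) *m v = 0.
  move=> [v0 Sv]; have := eigenvalue_root2 v0 Sv; rewrite trS detS => root.
  have al : a = l by apply/eqP; rewrite -subr_eq0 -sqrf_eq0; apply/eqP; lra.
  by rewrite mulmxBl Sv al mul_scalar_mx subrr.
move=> v w a b /eig_l Nv /eig_l Nw.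
by apply: kernel_collinear2 Nv Nw; rewrite subr_eq0.
Qed.

Lemma eigenline_classification2 S p l : \det S != 0 -> p != 0 -> S *m p = l *: p ->
  [\/ stable_dir S p, unstable_dir S p, parabolic S | exists2 d, d != 0 & S *m S = d%:M].
Proof.
move=> detS0 p0 Sp; set m := \tr S - l.
(* [m] is the other eigenvalue of [S], by Vieta. *)
case: (ltrgtP `|l| `|m|) => [lm | ml | /eqP].
- have [q Sq] : exists q, real_eigvec S m q.
    apply: real_eigvec_conj2 p0 Sp _; rewrite -/m.
    by apply: contraTneq lm => ->; rewrite ltxx.
  by constructor 1; exists l, m; split => //; exists q.
- have [q Sq] : exists q, real_eigvec S m q.
    apply: real_eigvec_conj2 p0 Sp _; rewrite -/m.
    by apply: contraTneq ml => ->; rewrite ltxx.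
  by constructor 2; exists m, l; split => //; exists q.
rewrite eqr_norm2 => /orP [/eqP lm | /eqP lNm].
  case: (scalar_or_parabolic2 p0 Sp _) => [| Sl | parS]; last by constructor 3.
    by rewrite {2}lm /m addrC subrK.
  constructor 4; exists (l * l); last by rewrite Sl -scalar_mxM.
  by move: detS0; rewrite Sl det_scalar -expr2.
constructor 4; exists (- \det S); first by rewrite oppr_eq0.
have trS0 : \tr S = 0 by rewrite -[\tr S](subrK l) -/m lNm subrr.
by rewrite cayley_hamilton2 trS0 scale0r sub0r raddfN.
Qed.

End Eigen2.

Section Conformal.
Local Open Scope complex_scope.

Lemma conformal_of_exp_scalar (R : realType) (A : mat R) N (d : R) :
  (0 < N)%N -> A ^+ N = d%:M -> conformal A.
Proof.
move=> N0 AN; set Ac := map_mx (fun x : R => x%:C) A.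
have AcN : Ac ^+ N = (d%:C)%:M.
  rewrite (_ : Ac = map_mx (real_complex R) A) // -rmorphXn AN.
  by apply/matrixP => i j; rewrite !mxE; case: (i == j).
have eigN l : ceig A l -> l ^+ N = d%:C.
  move=> /eigenvalueP [v Av v0].
  have vAc k : v *m Ac ^+ k = l ^+ k *: v.
    elim: k => [|k IHk]; first by rewrite !expr0 mulmx1 scale1r.
    by rewrite exprSr mulmxA IHk -scalemxAl Av scalerA -exprSr.
  move/eqP: (vAc N); rewrite AcN mul_mx_scalar -subr_eq0 -scalerBl scaler_eq0.
  by rewrite (negbTE v0) orbF subr_eq0 => /eqP.
move=> l m /eigN lN /eigN mN; apply/eqP.
by rewrite -(eqrXn2 N0) ?normr_ge0 // -!normrX lN mN.
Qed.

End Conformal.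

Lemma pcard_collinear_pair (R : realType) (P : pset R) k (z : nat -> vec R) :
  pcard P k -> (forall v, P v -> v != 0) -> (forall t, (t <= k)%N -> P (z t)) ->
  exists a b, [/\ (a < b)%N, (b <= k)%N & collinear (z a) (z b)].
Proof.
move=> [s [size_s sP _ cover]] P0 Pz.
pose f t := find (fun u => \det (row_mx (z t) u) == 0) s.
have f_col t : (t <= k)%N -> (f t < k)%N /\ collinear (z t) (nth 0 s (f t)).
  move=> tk; have [w ws zw] := cover _ (Pz t tk).
  have has_s : has (fun u => \det (row_mx (z t) u) == 0) s by apply/hasP; exists w => //; apply/eqP.
  by split; [rewrite -size_s -has_find | apply/eqP/(nth_find 0 has_s)].
have /(uniqPn 0%N) [a [b [ab]]] : ~~ uniq (map f (iota 0 k.+1)).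
  apply/negP => /uniq_leq_size sub_iota.
  have : (size (map f (iota 0 k.+1)) <= size (iota 0 k))%N.
    by apply: sub_iota => x /mapP [t]; rewrite !mem_iota /= => tk ->; case: (f_col t tk).
  by rewrite size_map !size_iota ltnn.
rewrite size_map size_iota => bk; rewrite !(nth_map 0%N) ?size_iota ?(ltn_trans ab) //.
rewrite !nth_iota ?(ltn_trans ab) // !add0n => fab.
have [[_ za] [fb zb]] := (f_col a (ltnW (leq_trans ab bk)), f_col b bk).
exists a, b; split => //; rewrite fab in za.
by apply: collinear_trans za zb _; apply/P0/sP/mem_nth; rewrite size_s.
Qed.

Section UnstableMulticone.
Variables (R : realType) (Aset : mat R -> Prop) (C : pset R).
Hypothesis GL : forall A, Aset A -> \det A != 0.
Hypothesis invC : minvariant Aset C.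
Hypothesis mcC : multicone C.
Hypothesis C_Xs : forall v, ~ (C v /\ Xs Aset v).
Hypothesis bdC_Xu : forall v, ~ (pboundary C v /\ Xu Aset v).
Hypothesis nopar : forall B, semigroup Aset B -> ~ parabolic B.
Variable k : nat.
Hypothesis card_bdC : pcard (pboundary C) k.

Lemma scaled_semigroup_sqr_scalar M p (c : R) : scaled_semigroup Aset M ->
  C p -> ~ pinterior C p -> M *m p = c *: p -> exists2 d, d != 0 & M *m M = d%:M.
Proof.
move=> [a [S [a0 SS ->]]] Cp notint Mp.
have p0 := multicone_neq0 mcC Cp.
have Sp : S *m p = (a^-1 * c) *: p.
  by rewrite -scalerA -Mp -scalemxAl scalerA mulVf // scale1r.
have [stab | unst | par | [d d0 S2]] :=
  eigenline_classification2 (semigroup_det_neq0 GL SS) p0 Sp.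
- by case: (@C_Xs p); split=> //; apply: pclosure_refl p0 _; exists S.
- case: (@bdC_Xu p); split; first exact: boundary_of_not_interior.
  by apply: pclosure_refl p0 _; exists S.
- by case: (nopar SS).
exists (a * a * d); first by rewrite !mulf_neq0.
by rewrite -scalemxAl -scalemxAr S2 !scalerA scale_scalar_mx.
Qed.

Lemma invmx_invariant_of_sqr_scalar A Y M d : \det A != 0 ->
  (forall x, C x -> C (Y *m x)) -> (forall x, C x -> C (M *m x)) ->
  M = A *m Y -> M *m M = d%:M -> d != 0 -> forall x, C x -> C (invmx A *m x).
Proof.
move=> A0 YC MC MAY M2 d0 x Cx.
have Au : A \in unitmx by rewrite unitmxE unitfE.
have -> : x = A *m (Y *m (d^-1 *: (M *m x))).
  by rewrite mulmxA -MAY -scalemxAr mulmxA M2 mul_scalar_mx scalerA mulVf ?scale1r.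
by rewrite mulKmx //; apply/YC/(multicone_scale mcC)/MC; rewrite ?invr_neq0.
Qed.

Lemma conformal_of_invmx_invariant A p : Aset A -> (forall x, C x -> C (invmx A *m x)) ->
  C p -> ~ pinterior C p -> conformal A.
Proof.
move=> AA invAC Cp notint_p.
have Au : A \in unitmx by rewrite unitmxE unitfE GL.
pose z t := invmx A ^+ t *m p.
have zS t : z t = A *m z t.+1 by rewrite /z exprS -mulmxE !mulmxA mulmxV // mul1mx.
have Cz t : C (z t).
  by elim: t => [|t IHt]; rewrite /z ?expr0 ?mul1mx // exprS -mulmxA; apply: invAC.
have notint_z t : ~ pinterior C (z t).
  elim: t => [|t IHt]; first by rewrite /z expr0 mul1mx.
  move/(scaled_semigroup_interior mcC GL invC (semigroup_scaled (sg_gen AA))).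
  by rewrite -zS.
have [a [b [ab _ zab]]] := pcard_collinear_pair card_bdC (fun v bd => bd.1.1)
  (fun t _ => boundary_of_not_interior mcC (Cz t) (notint_z t)).
have [c zac] := collinear_scale zab (multicone_neq0 mcC (Cz b)).
have zD t m : z t = A ^+ m *m z (t + m)%N.
  elim: m => [|m IHm]; first by rewrite expr0 mul1mx addn0.
  by rewrite IHm zS exprSr -mulmxE mulmxA addnS.
have Azb : A ^+ (b - a) *m z b = c *: z b.
  by rewrite -zac (zD a (b - a)%N) subnKC // ltnW.
have ba0 : (0 < b - a)%N by rewrite subn_gt0.
have [d _ A2] := scaled_semigroup_sqr_scalar
  (semigroup_scaled (semigroup_exp AA ba0)) (Cz b) (notint_z b) Azb.
apply: (@conformal_of_exp_scalar _ _ (b - a + (b - a)) d).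
  by rewrite addn_gt0 ba0.
by rewrite exprD.
Qed.

Lemma prod_nonconformal_interior (A F : nat -> mat R) n :
  (forall j, Aset (A j) /\ ~ conformal (A j)) -> (forall j, Fset Aset (F j)) ->
  (k <= n)%N -> forall v, C v -> pinterior C ((\prod_(0 <= j < n) (A j *m F j)) *m v).
Proof.
move=> AA FF kn v Cv; apply: NNPP => notint.
pose P i j := \prod_(i <= l < j) (A l *m F l).
have SG j : scaled_semigroup Aset (A j *m F j).
  apply: scaled_semigroup_mul (Fset_scaled GL (FF j)).
  exact/semigroup_scaled/sg_gen/(AA j).1.
have PC i j : forall x, C x -> C (P i j *m x).
  by apply: prod_mulmx_closed => l; exact: (scaled_semigroup_invariant mcC invC (SG l)).
have Pint i j : forall x, pinterior C x -> pinterior C (P i j *m x).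
  by apply: prod_mulmx_closed => l; exact: (scaled_semigroup_interior mcC GL invC (SG l)).
pose W j := P j n *m v.
have WP i j : (i <= j <= n)%N -> W i = P i j *m W j.
  by case/andP => ij jn; rewrite /W /P (big_cat_nat ij jn) -mulmxA.
have notint_W j : (j <= n)%N -> ~ pinterior C (W j).
  by move=> jn /(Pint 0%N j); rewrite -WP.
have [a [b [ab bk Wab]]] := pcard_collinear_pair card_bdC (fun v bd => bd.1.1)
  (fun t tk => boundary_of_not_interior mcC (PC _ _ _ Cv) (notint_W t (leq_trans tk kn))).
have bn := leq_trans bk kn.
have [c Wac] := collinear_scale Wab (multicone_neq0 mcC (PC _ _ _ Cv)).
have PW : P a b *m W b = c *: W b by rewrite -(WP a b) ?(ltnW ab) ?bn.
have [d d0 P2] := scaled_semigroup_sqr_scalar (scaled_semigroup_prod SG ab)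
  (PC _ _ _ Cv) (notint_W b bn) PW.
apply: (AA a).2.
apply: conformal_of_invmx_invariant (AA a).1 _ (PC _ _ _ Cv) (notint_W b bn).
apply: (invmx_invariant_of_sqr_scalar (Y := F a *m P a.+1 b) (GL (AA a).1) _ (PC a b) _ P2 d0).
  move=> x Cx; rewrite -mulmxA.
  exact/(scaled_semigroup_invariant mcC invC (Fset_scaled GL (FF a)))/PC.
by rewrite {1}/P big_ltn // mulmxA.
Qed.

End UnstableMulticone.

Unset Implicit Arguments. Set Strict Implicit.

Theorem lemma3p8 (R : realType) (Aset : mat R -> Prop) (C : pset R)
  (GL : forall A, Aset A -> \det A != 0)
  (inv : minvariant Aset C)
  (unst : unstable_multicone Aset C)
  (nopar : forall B, semigroup Aset B -> ~ parabolic B) :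
  forall k : nat, pcard (pboundary C) k ->
  forall (n : nat), (k ^ 2 + 1 <= n)%N ->
  forall (A F : 'I_n -> mat R),
    (forall i, Aset (A i) /\ ~ conformal (A i)) ->
    (forall i, Fset Aset (F i)) ->
    forall v, C v -> pinterior C ((\prod_(i < n) (A i *m F i)) *m v).
Proof.
move=> k card_bdC n kn A F AA FF v Cv.
case: unst => mcC _ C_Xs bdC_Xu _.
case: n => [|n] in kn A F AA FF *; first by rewrite addn1 in kn.
have -> : \prod_(i < n.+1) (A i *m F i)
    = \prod_(0 <= j < n.+1) (A (inord j) *m F (inord j)).
  by rewrite big_mkord; apply: eq_bigr => i _; rewrite inord_val.
apply: (prod_nonconformal_interior GL inv mcC C_Xs bdC_Xu nopar card_bdC) Cv => //.
by move: kn; nia.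
Qed.
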